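(* Let $n$ be odd, let $p'$ be a prime divisor of $n$, and let $A=L(n;p')$. Let $p$ be a prime divisor of $n$ which is coprime with $n'=n/p$. Then $S(n')\subseteq f(A)$, where $f:\mathbb{Z}_n\to\mathbb{Z}_{n'}$ is the natural map.
   Context: $U(m)$ is the unit group of $\mathbb{Z}_m$. For odd $m=\prod p_i^{r_i}$, a prime $p\mid m$ and $a\in U(m)$, $\left(\frac{a}{p}\right)$ is the Legendre symbol of the image of $a$ in $\mathbb{Z}_p$ and $\left(\frac{a}{m}\right)=\prod\left(\frac{a}{p_i}\right)^{r_i}$ is the Jacobi symbol; $S(m)$ is the kernel of $a\mapsto\left(\frac{a}{m}\right)$ on $U(m)$, and for a prime $p'\mid m$, $L(m;p')=\{a\in U(m):\left(\frac{a}{m}\right)=\left(\frac{a}{p'}\right)\}$. The natural map $\mathbb{Z}_n\to\mathbb{Z}_{n'}$ is $a+n\mathbb{Z}\mapsto a+n'\mathbb{Z}$. *)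

From mathcomp Require Import all_boot all_order all_algebra.
Set Implicit Arguments. Unset Strict Implicit. Unset Printing Implicit Defensive.
Import GRing.Theory Num.Theory.
Local Open Scope ring_scope.

(* Elements of Z_m are represented by their canonical representatives
   a : nat with a < m. *)

Definition unitZ (m a : nat) : bool := (a < m)%N && coprime a m.

Definition legendre (p a : nat) : int :=
  if (p %| a)%N then 0
  else if [exists x : 'I_p, (x * x == a %[mod p])%N] then 1 else -1.

Definition jacobi (m a : nat) : int :=
  \prod_(q <- primes m) (legendre q a) ^+ (logn q m).

Definition Sset (m a : nat) : bool := unitZ m a && (jacobi m a == 1).

Definition Lset (m p' a : nat) : bool := unitZ m a && (jacobi m a == legendre p' a).

From mathcomp Require Import all_boot all_order all_algebra zify.
Set Implicit Arguments. Unset Strict Implicit. Unset Printing Implicit Defensive.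
Import GRing.Theory.

(* By the Chinese remainder theorem b can
   be lifted to a mod n with any prescribed residue c mod p, and then
   (a/n) = (b/n') (c/p) = (c/p).  If p' = p this is (a/p'), whatever the unit c.
   Otherwise p' | n', so (a/p') = (b/p') = +-1, and since the odd prime p has
   both residues and non-residues, c can be chosen with (c/p) = (b/p'). *)

Lemma eqmod_dvdm (d m a b : nat) : d %| m -> a = b %[mod m] -> a = b %[mod d].
Proof. by move=> dvd_d_m; rewrite -(modn_dvdm a dvd_d_m) -(modn_dvdm b dvd_d_m) => ->. Qed.

Lemma coprime_eqmod (m a b : nat) : a = b %[mod m] -> coprime a m = coprime b m.
Proof. by move=> eq_ab; rewrite -coprime_modl eq_ab coprime_modl. Qed.

Lemma chinese_lift (m1 m2 r1 r2 : nat) : 0 < m1 * m2 -> coprime m1 m2 ->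
  exists a, [/\ a < m1 * m2, a = r1 %[mod m1] & a = r2 %[mod m2]].
Proof.
move=> m_gt0 co_m12; exists (chinese m1 m2 r1 r2 %% (m1 * m2)).
rewrite ltn_pmod // (modn_dvdm _ (dvdn_mulr m2 (dvdnn m1))).
by rewrite (modn_dvdm _ (dvdn_mull m1 (dvdnn m2))) chinese_modl ?chinese_modr.
Qed.

Lemma legendre_eqmod (q a b : nat) : a = b %[mod q] -> legendre q a = legendre q b.
Proof. by move=> eq_ab; rewrite /legendre /dvdn eq_ab. Qed.

Lemma legendre_eq0 (q a : nat) : (legendre q a == 0%R) = (q %| a).
Proof. by rewrite /legendre; case: (q %| a) => //; case: [exists _, _]. Qed.

Lemma legendre1 (q : nat) : 1 < q -> legendre q 1 = 1%R.
Proof.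
move=> q_gt1; rewrite /legendre dvdn1 gtn_eqF //.
by case: existsP => // -[]; exists (Ordinal q_gt1).
Qed.

Lemma exists_nonresidue (q : nat) : 2 < q -> exists c, legendre q c = (-1)%R.
Proof.
move=> q_gt2; have q_gt0 : 0 < q by lia.
pose sq (x : 'I_q) := Ordinal (ltn_pmod (x * x) q_gt0).
have sqE (x : 'I_q) c : (x * x == c %[mod q]) = (sq x == c %% q :> nat) by [].
(* A surjective self-map of a finite type is injective, but 1 and q - 1 have
   the same square. *)
have [c c_nsq] : exists c, c \notin codom sq.
  apply/existsP; apply: contraT; rewrite negb_exists => /forallP /= all_sq.
  have sq_inj : injective sq.
    apply: in2T; apply/image_injP; apply/eqP; apply: eq_card => c.
    by rewrite -[c \in _]negbK all_sq.
  have q1_lt_q : q.-1 < q by lia.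
  have q1_gt1 : 1 < q by lia.
  have /(congr1 val) /= : Ordinal q1_gt1 = Ordinal q1_lt_q.
    apply: sq_inj; apply: val_inj => /=.
    have -> : q.-1 * q.-1 = (q - 2) * q + 1 by nia.
    by rewrite modnMDl.
  by move=> q1_eq1; move: q_gt2; rewrite -(prednK q_gt0) -q1_eq1.
have c_gt0 : 0 < c.
  rewrite lt0n; apply: contra c_nsq => /eqP c0.
  by apply/codomP; exists (Ordinal q_gt0); apply: val_inj; rewrite /= c0 mod0n.
exists (nat_of_ord c); rewrite /legendre (gtnNdvd c_gt0 (ltn_ord c)).
case: existsP => // -[x]; rewrite sqE modn_small // => /eqP sq_x.
by case/negP: c_nsq; rewrite -(val_inj sq_x) codom_f.
Qed.

Lemma exists_legendre_eq (q r b : nat) : 2 < q -> ~~ (r %| b) ->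
  exists c, legendre q c = legendre r b.
Proof.
move=> q_gt2 r_ndvd_b; rewrite {2}/legendre (negbTE r_ndvd_b).
case: existsP => _; last exact: exists_nonresidue.
by exists 1; rewrite legendre1 // ltnW.
Qed.

Lemma jacobi_prod_lt (m a N : nat) : m < N ->
  jacobi m a = (\prod_(0 <= q < N) legendre q a ^+ logn q m)%R.
Proof.
move=> lt_m_N; rewrite /jacobi -(filter_pi_of lt_m_N) big_filter big_mkcond /=.
by apply: eq_bigr => q _; rewrite -logn_gt0; case: (logn q m).
Qed.

Lemma jacobiM (m1 m2 a : nat) : 0 < m1 -> 0 < m2 ->
  jacobi (m1 * m2) a = (jacobi m1 a * jacobi m2 a)%R.
Proof.
move=> m1_gt0 m2_gt0; pose N := (m1 * m2).+1.
have lt_m1_N : m1 < N by rewrite ltnS leq_pmulr.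
have lt_m2_N : m2 < N by rewrite ltnS leq_pmull.
rewrite (jacobi_prod_lt a (ltnSn _)) (jacobi_prod_lt a lt_m1_N).
rewrite (jacobi_prod_lt a lt_m2_N) -big_split /=.
by apply: eq_bigr => q _; rewrite lognM // exprD.
Qed.

Lemma jacobi_prime (p a : nat) : prime p -> jacobi p a = legendre p a.
Proof. by move=> p_pr; rewrite /jacobi primes_prime // big_seq1 logn_prime // eqxx expr1. Qed.

Lemma jacobi_eqmod (m a b : nat) : a = b %[mod m] -> jacobi m a = jacobi m b.
Proof.
move=> eq_ab; apply: eq_big_seq => q; rewrite mem_primes => /and3P[_ _ q_dvd_m].
by rewrite (legendre_eqmod (eqmod_dvdm q_dvd_m eq_ab)).
Qed.

Theorem lemma3p3 (n p' p : nat) :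
  odd n -> prime p' -> (p' %| n)%N -> prime p -> (p %| n)%N ->
  coprime p (n %/ p) ->
  forall b : nat, Sset (n %/ p) b ->
  exists a : nat, Lset n p' a /\ (a %% (n %/ p))%N = b.
Proof.
move=> odd_n p'_pr p'_dvd_n p_pr p_dvd_n.
rewrite -[n in Lset n](divnK p_dvd_n); set n' := n %/ p.
rewrite coprime_sym => co_n'_p b /andP[/andP[lt_b_n' co_b_n'] /eqP jac_b].
have n_gt0 : 0 < n' * p by rewrite divnK // odd_gt0.
have p_gt2 : 2 < p by rewrite odd_prime_gt2 // (dvdn_odd p_dvd_n odd_n).
have p'_dvd_n' : p' != p -> p' %| n'.
  move=> ne; move: p'_dvd_n; rewrite -(divnK p_dvd_n) Euclid_dvdM //.
  by rewrite (dvdn_prime2 p'_pr p_pr) (negbTE ne) orbF.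
have p'_ndvd_b : p' != p -> ~~ (p' %| b).
  move=> ne; rewrite -prime_coprime // coprime_sym.
  exact: coprime_dvdr (p'_dvd_n' ne) co_b_n'.
have [c leg_c] : exists c, legendre p c = if p' == p then 1%R else legendre p' b.
  case: (eqVneq p' p) => [_ | ne]; first by exists 1; rewrite legendre1 // ltnW.
  exact: exists_legendre_eq (p'_ndvd_b ne).
have co_c_p : coprime c p.
  rewrite coprime_sym prime_coprime // -legendre_eq0 leg_c.
  by case: ifPn => // ne; rewrite legendre_eq0 p'_ndvd_b.
have [a [lt_a_n a_b a_c]] := chinese_lift b c n_gt0 co_n'_p.
exists a; split; last by rewrite a_b modn_small.
rewrite /Lset /unitZ lt_a_n coprimeMr (coprime_eqmod a_b) (coprime_eqmod a_c).
rewrite co_b_n' co_c_p /=.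
have [n'_gt0 p_gt0] : 0 < n' /\ 0 < p by apply/andP; rewrite -muln_gt0.
rewrite jacobiM // (jacobi_prime _ p_pr) (jacobi_eqmod a_b) jac_b mul1r.
rewrite (legendre_eqmod a_c).
case: (eqVneq p' p) leg_c => [-> _ | ne ->]; first by rewrite (legendre_eqmod a_c).
by rewrite (legendre_eqmod (eqmod_dvdm (p'_dvd_n' ne) a_b)).
Qed.
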